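(* Let $P$ be a finite poset and $t\geq 2$, $n\geq 1$ integers. Suppose $\mathcal{F}\subseteq[t]^n$ is induced $P$-saturated and $i\in[n]$ is such that (a) $i$ is not separating for $\mathcal{F}$, and (b) $f(i)\in\{1,t\}$ for all $f\in\mathcal{F}$. Then $L_i(\mathcal{F})=\{L_i(f):f\in\mathcal{F}\}$ is an induced $P$-saturated family in $[t]^{n+1}$.
   Context: $[n]=\{1,\dots,n\}$; $[t]^n$ is the set of functions $f:[n]\to[t]$ ordered by $f\leq g$ iff $f(j)\leq g(j)$ for all $j$. An induced copy of $P$ in $\mathcal{F}\subseteq[t]^n$ is an injective map $\phi:P\to\mathcal{F}$ with $\phi(x)\leq\phi(y)$ iff $x\leq_P y$. $\mathcal{F}$ is induced $P$-saturated if it contains no induced copy of $P$ and for every $f\in[t]^n\setminus\mathcal{F}$, $\mathcal{F}\cup\{f\}$ contains an induced copy of $P$. For $f\in[t]^n$ and $i\in[n]$: $L_i(f)\in[t]^{n+1}$ is given by $L_i(f)(x)=f(x)$ for $x\in[n]$ and $L_i(f)(n+1)=f(i)$; $D_i(f)\in[t]^{n-1}$ is given by $D_i(f)(x)=f(x)$ for $x<i$ and $D_i(f)(x)=f(x+1)$ for $i\leq x\leq n-1$. Coordinate $i$ is separating for $\mathcal{F}$ if there exist distinct $f,f'\in\mathcal{F}$ with $D_i(f)\leq D_i(f')$ and $f(i)>f'(i)$. *)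

From mathcomp Require Import all_boot all_order.
Set Implicit Arguments. Unset Strict Implicit. Unset Printing Implicit Defensive.
Import Order.Theory.

(* [t]^n is modelled by {ffun 'I_n -> 'I_t}: coordinates 0..n-1, values 0..t-1
   (the shift by one preserves the order). *)
Notation grid n t := {ffun 'I_n -> 'I_t}.

Definition leF (n t : nat) (f g : grid n t) : bool :=
  [forall j, (nat_of_ord (f j) <= nat_of_ord (g j))%N].

Definition has_induced_copy (d : Order.disp_t) (P : finPOrderType d)
  (n t : nat) (F : {set grid n t}) : Prop :=
  exists phi : P -> grid n t,
    [/\ injective phi, (forall x, phi x \in F) &
        (forall x y, leF (phi x) (phi y) = (x <= y)%O)].

Definition induced_saturated (d : Order.disp_t) (P : finPOrderType d)
  (n t : nat) (F : {set grid n t}) : Prop :=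
  ~ has_induced_copy P F /\
  (forall f : grid n t, f \notin F -> has_induced_copy P (f |: F)).

Definition Lext (n t : nat) (i : 'I_n) (f : grid n t) : grid n.+1 t :=
  [ffun x : 'I_n.+1 => match unlift ord_max x with
                       | Some y => f y
                       | None => f i end].

Definition Ddel (n t : nat) (i : 'I_n) (f : grid n t) : grid n.-1 t :=
  [ffun x : 'I_n.-1 => f (lift i x)].

Definition separating (n t : nat) (i : 'I_n) (F : {set grid n t}) : Prop :=
  exists f f', [/\ f \in F, f' \in F, f != f',
                   leF (Ddel i f) (Ddel i f') &
                   (nat_of_ord (f' i) < nat_of_ord (f i))%N].

(* Call e in [t]^n a representative of g in [t]^(n+1) if for every f in F we
   have f <= e iff L_i f <= g, and e <= f iff g <= L_i f.  As L_i is an order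
   embedding, replacing e by g turns an induced copy of P in F + e into one in
   L_i(F) + g, so it suffices to represent every g outside L_i(F) by some e
   outside F.  Take for e the restriction of g to [n] with coordinate i reset to
   a value c.  If g(i) = g(n+1), then c = g(i) works, and e is not in F since
   L_i e = g.  Otherwise, as f(i) is 1 or t, the value c = 1 works unless some f
   in F lies above g off coordinate i with f(i) = 1, and c = t works unless some
   f' in F lies below g off coordinate i with f'(i) = t; both together would make
   i separating. *)
From mathcomp Require Import all_boot all_order.
From mathcomp Require Import zify.
Set Implicit Arguments. Unset Strict Implicit.
Import Order.Theory.

Section PointwiseOrder.
Variables n t : nat.
Implicit Types f g h : grid n t.

Lemma leF_refl f : leF f f.
Proof. exact/forallP. Qed.

Lemma leF_trans g f h : leF f g -> leF g h -> leF f h.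
Proof.
move=> /forallP fg /forallP gh; apply/forallP => j.
exact: leq_trans (fg j) (gh j).
Qed.

Lemma leF_Ddel (i : 'I_n) f g : leF f g = leF (Ddel i f) (Ddel i g) && (f i <= g i).
Proof.
apply/forallP/andP => [le_fg | [/forallP le_del le_i] j].
  by split; first apply/forallP => x; rewrite ?ffunE le_fg.
by case: (unliftP i j) => [x ->|->] //; have := le_del x; rewrite !ffunE.
Qed.

Definition setcoord f (i : 'I_n) (c : 'I_t) : grid n t :=
  [ffun j => if j == i then c else f j].

Lemma setcoord_at f i c : setcoord f i c i = c.
Proof. by rewrite ffunE eqxx. Qed.

Lemma Ddel_setcoord f i c : Ddel i (setcoord f i c) = Ddel i f.
Proof. by apply/ffunP => x; rewrite !ffunE eq_sym (negbTE (neq_lift i x)). Qed.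

End PointwiseOrder.

Lemma induced_copy_embed (d : Order.disp_t) (P : finPOrderType d) (n m t : nat)
    (A : {set grid n t}) (B : {set grid m t}) (h : grid n t -> grid m t) :
  {in A, forall f, h f \in B} ->
  {in A &, forall f g, leF (h f) (h g) = leF f g} ->
  has_induced_copy P A -> has_induced_copy P B.
Proof.
move=> hAB h_mono [phi [_ phiA phi_mono]].
exists (h \o phi); split=> [x y /= hxy|x|x y /=]; last by rewrite h_mono ?phi_mono.
  by apply/le_anti; rewrite -!phi_mono -!h_mono // hxy leF_refl.
exact: hAB.
Qed.

Section Extension.
Variables (n t : nat) (i : 'I_n).
Implicit Types (f : grid n t) (g : grid n.+1 t).

Lemma Lext_lift f x : Lext i f (lift ord_max x) = f x.
Proof. by rewrite ffunE liftK. Qed.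

Lemma Lext_max f : Lext i f ord_max = f i.
Proof. by rewrite ffunE unlift_none. Qed.

Lemma LextK : cancel (@Lext n t i) (Ddel ord_max).
Proof. by move=> f; apply/ffunP => x; rewrite ffunE Lext_lift. Qed.

Lemma Ddel_maxK g : g ord_max = g (lift ord_max i) -> Lext i (Ddel ord_max g) = g.
Proof.
move=> g_max; apply/ffunP => x.
by case: (unliftP ord_max x) => [y ->|->]; rewrite ?Lext_lift ?Lext_max ffunE.
Qed.

Lemma leF_Lextl f g : leF (Lext i f) g = leF f (Ddel ord_max g) && (f i <= g ord_max).
Proof. by rewrite (leF_Ddel ord_max) LextK Lext_max. Qed.

Lemma leF_Lextr f g : leF g (Lext i f) = leF (Ddel ord_max g) f && (g ord_max <= f i).
Proof. by rewrite (leF_Ddel ord_max) LextK Lext_max. Qed.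

Lemma leF_Lext f f' : leF (Lext i f) (Lext i f') = leF f f'.
Proof.
rewrite leF_Lextl LextK Lext_max.
by case: (leF f f') (leF_Ddel i f f') => [/esym/andP[_ ->]|].
Qed.

End Extension.

Definition represents (n m t : nat) (h : grid n t -> grid m t) (F : {set grid n t})
    (g : grid m t) (e : grid n t) :=
  forall f, f \in F -> leF f e = leF (h f) g /\ leF e f = leF g (h f).

Lemma induced_copy_extend (d : Order.disp_t) (P : finPOrderType d) (n m t : nat)
    (F : {set grid n t}) (h : grid n t -> grid m t) (e : grid n t) (g : grid m t) :
  {in F &, forall f f', leF (h f) (h f') = leF f f'} -> represents h F g e ->
  has_induced_copy P (e |: F) -> has_induced_copy P (g |: h @: F).
Proof.
move=> h_mono e_rep; pose h' f := if f == e then g else h f.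
have inF f : f \in e |: F -> f != e -> f \in F by case/setU1P=> [->|//]; rewrite eqxx.
apply: (@induced_copy_embed _ _ _ _ _ _ _ h') => [f f_in|f f' f_in f'_in]; rewrite /h'.
  case: eqVneq => [_|fe]; first exact: setU11.
  by rewrite setU1r // imset_f ?inF.
case: eqVneq => [->|fe]; case: eqVneq => [->|f'e]; rewrite ?leF_refl //.
- by case: (e_rep f' (inF _ f'_in f'e)).
- by case: (e_rep f (inF _ f_in fe)).
- by rewrite h_mono ?inF.
Qed.

Section Representative.
Variables (n t : nat) (i : 'I_n) (F : {set grid n t}) (g : grid n.+1 t).
Hypothesis extremal : forall f, f \in F -> nat_of_ord (f i) = 0 \/ nat_of_ord (f i) = t.-1.

Local Notation u := (Ddel ord_max g : grid n t).
Local Notation below f := (leF (Ddel i f) (Ddel i u)).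
Local Notation above f := (leF (Ddel i u) (Ddel i f)).

Lemma represents_setcoord (c : 'I_t) :
  (forall f, f \in F -> below f -> (f i <= c) = (f i <= u i) && (f i <= g ord_max)) ->
  (forall f, f \in F -> above f -> (c <= f i) = (u i <= f i) && (g ord_max <= f i)) ->
  represents (Lext i) F g (setcoord u i c).
Proof.
move=> c_below c_above f fF; rewrite leF_Lextl leF_Lextr.
rewrite [leF f _](leF_Ddel i) [leF _ f](leF_Ddel i) [leF f u](leF_Ddel i).
rewrite [leF u f](leF_Ddel i) Ddel_setcoord setcoord_at -!andbA.
split; [case f_below: (below f) | case f_above: (above f)]; rewrite /= ?c_below ?c_above //.
Qed.

Hypothesis u_neq : nat_of_ord (u i) != g ord_max.

Lemma represents_setcoord0 (c : 'I_t) : nat_of_ord c = 0 ->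
  (forall f, f \in F -> above f -> nat_of_ord (f i) != 0) ->
  represents (Lext i) F g (setcoord u i c).
Proof.
move=> c0 no_above0; apply: represents_setcoord => f fF f_rel; rewrite c0.
all: have := extremal fF; have := ltn_ord (u i); have := ltn_ord (g ord_max).
  by lia.
by have := no_above0 f fF f_rel; lia.
Qed.

Lemma represents_setcoord_max (c : 'I_t) : nat_of_ord c = t.-1 ->
  (forall f, f \in F -> below f -> nat_of_ord (f i) != t.-1) ->
  represents (Lext i) F g (setcoord u i c).
Proof.
move=> c_max no_below_max; apply: represents_setcoord => f fF f_rel; rewrite c_max.
all: have := extremal fF; have := ltn_ord (u i); have := ltn_ord (g ord_max).
  by have := no_below_max f fF f_rel; lia.
by lia.
Qed.

End Representative.

Lemma separating_across (n t : nat) (i : 'I_n) (F : {set grid n t}) (u f f' : grid n t) :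
  f \in F -> f' \in F -> leF (Ddel i f) (Ddel i u) -> leF (Ddel i u) (Ddel i f') ->
  f' i < f i -> separating i F.
Proof.
move=> fF f'F f_below f'_above lt_f'f; exists f, f'; split => //.
  by apply: contraTneq lt_f'f => ->; rewrite ltnn.
exact: leF_trans f_below f'_above.
Qed.

Lemma exists_representative (n t : nat) (i : 'I_n) (F : {set grid n t}) (g : grid n.+1 t) :
  (forall f, f \in F -> nat_of_ord (f i) = 0 \/ nat_of_ord (f i) = t.-1) ->
  ~ separating i F -> g \notin Lext i @: F ->
  exists2 e, e \notin F & represents (Lext i) F g e.
Proof.
move=> extremal nsep gF; pose u : grid n t := Ddel ord_max g.
have [u_eq|u_neq] := eqVneq (nat_of_ord (u i)) (g ord_max).
  have g_eq : Lext i u = g by apply: Ddel_maxK; apply: val_inj => /=; rewrite -u_eq ffunE.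
  exists u; first by apply: contra gF => uF; rewrite -g_eq imset_f.
  by move=> f fF; rewrite -g_eq !leF_Lext.
have t_gt1 : 1 < t by have := ltn_ord (u i); have := ltn_ord (g ord_max); lia.
have lt_t0 : 0 < t by lia.
have lt_tmax : t.-1 < t by lia.
have [|no_above0] := boolP [exists f in F, leF (Ddel i u) (Ddel i f) && (f i == 0 :> nat)].
  case/exists_inP => f1 f1F /andP[f1_above /eqnP f1_0].
  have above_max f : f \in F -> leF (Ddel i f) (Ddel i u) -> f i = t.-1 :> nat -> False.
    move=> fF f_below f_max; apply: nsep; apply: (separating_across fF f1F f_below f1_above).
    by rewrite f1_0 f_max; lia.
  exists (setcoord u i (Ordinal lt_tmax)).
    apply/negP => eF; apply: above_max eF _ _; rewrite ?Ddel_setcoord ?setcoord_at ?leF_refl //.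
  apply: represents_setcoord_max => // f fF f_below.
  by apply/eqP => f_max; apply: above_max fF f_below f_max.
exists (setcoord u i (Ordinal lt_t0)).
  apply: contra no_above0 => eF; apply/exists_inP; exists (setcoord u i (Ordinal lt_t0)) => //.
  by rewrite Ddel_setcoord leF_refl setcoord_at.
apply: represents_setcoord0 => // f fF f_above; apply: contra no_above0 => /eqP f0.
by apply/exists_inP; exists f; rewrite // f_above f0.
Qed.

Theorem mainTheorem11 (d : Order.disp_t) (P : finPOrderType d) (t n : nat)
  (F : {set {ffun 'I_n -> 'I_t}}) (i : 'I_n) :
  (2 <= t)%N -> (1 <= n)%N ->
  induced_saturated P F ->
  ~ separating i F ->
  (forall f, f \in F -> nat_of_ord (f i) = 0%N \/ nat_of_ord (f i) = t.-1) ->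
  induced_saturated P [set Lext i f | f in F].
Proof.
(* n >= 1 follows from i : 'I_n; t >= 2 is only needed when g(i) <> g(n+1), which forces it. *)
move=> _ _ [no_copy saturated] nsep extremal; split.
  apply: contra_not no_copy; apply: (@induced_copy_embed _ _ _ _ _ _ _ (Ddel ord_max)).
    by move=> _ /imsetP[f fF ->]; rewrite LextK.
  by move=> _ _ /imsetP[f _ ->] /imsetP[f' _ ->]; rewrite !LextK leF_Lext.
move=> g gF; have [e eF e_rep] := exists_representative extremal nsep gF.
apply: (induced_copy_extend _ e_rep (saturated e eF)).
by move=> f f' _ _; rewrite leF_Lext.
Qed.
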